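(* Let $\lambda$ be the smallest cardinal $\kappa$ with $2^\kappa>\mathfrak{c}$. For every free ultrafilter $\mathcal{F}$ on $\mathbb{Z}$ there is a chain $\mathcal{K}\subset\mathcal{L}_0$ with $|\mathcal{K}|=2^\lambda$ such that $\tau[\mathcal{F}]\subset\tau$ for every $\tau\in\mathcal{K}$.
   Context: $\mathfrak{c}=|\mathbb{R}|$. $\eta$ denotes the Euclidean topology on $\mathbb{R}$. $\mathcal{L}$ denotes the family of all Hausdorff topologies $\tau$ on $\mathbb{R}$ with $\tau\subset\eta$. For $\tau\in\mathcal{L}$ and $a\in\mathbb{R}$ let $\mathcal{N}_\tau(a)$ be the neighborhood filter of $a$; let $C(\tau)$ be the set of all $a$ with $\mathcal{N}_\tau(a)\neq\mathcal{N}_\eta(a)$. $\mathcal{L}_0:=\{\tau\in\mathcal{L}\mid C(\tau)\subset\{0\}\}$. For a free ultrafilter $\mathcal{F}$ on $\mathbb{Z}$, $\tau[\mathcal{F}]$ is the topology on $\mathbb{R}$ in which $U\subset\mathbb{R}$ is open iff $U$ is Euclidean open and ($0\notin U$ or $U\cap\mathbb{Z}\in\mathcal{F}$). A chain is a family of topologies totally ordered by inclusion. *)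

From HB Require Import structures.
From mathcomp Require Import all_boot all_order all_algebra.
From mathcomp Require Import all_classical all_reals all_analysis.
Import Order.TTheory GRing.Theory Num.Theory.
Import numFieldNormedType.Exports.
Local Open Scope classical_set_scope.
Local Open Scope ring_scope.

Definition is_topology (R : realType) (tau : set (set R)) : Prop :=
  tau setT /\
  (forall (I : Type) (U : I -> set R), (forall i, tau (U i)) -> tau (\bigcup_i U i)) /\
  (forall U V, tau U -> tau V -> tau (U `&` V)).

Definition eta_top (R : realType) : set (set R) := [set U : set R | open U].

Definition hausdorff_top (R : realType) (tau : set (set R)) : Prop :=
  forall x y : R, x <> y ->
    exists U V, [/\ tau U, tau V, U x, V y & U `&` V = set0].

Definition LL (R : realType) : set (set (set R)) :=
  [set tau | [/\ is_topology R tau, hausdorff_top R tau & tau `<=` eta_top R]].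

Definition nbhd_filter (R : realType) (tau : set (set R)) (a : R) : set (set R) :=
  [set N | exists U, [/\ tau U, U a & U `<=` N]].

Definition Cset (R : realType) (tau : set (set R)) : set R :=
  [set a | nbhd_filter R tau a <> nbhd_filter R (eta_top R) a].

Definition LL0 (R : realType) : set (set (set R)) :=
  [set tau | LL R tau /\ Cset R tau `<=` [set 0]].

Definition free_ultrafilter (F : set (set int)) : Prop :=
  [/\ F setT /\ ~ F set0,
      (forall A B, F A -> A `<=` B -> F B),
      (forall A B, F A -> F B -> F (A `&` B)),
      (forall A, F A \/ F (~` A)) &
      (forall n : int, ~ F [set n])].

Definition tauF (R : realType) (F : set (set int)) : set (set R) :=
  [set U : set R | open U /\ (~ U 0 \/ F [set z : int | U ((z%:~R) : R)])].

Definition is_chain (T : Type) (K : set (set (set T))) : Prop :=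
  forall t1 t2, K t1 -> K t2 -> t1 `<=` t2 \/ t2 `<=` t1.

Definition powset (T : Type) (A : set T) : set (set T) := [set B | B `<=` A].

(* A has cardinality lambda = the least cardinal kappa with 2^kappa > c = |R| *)
Definition is_lambda (R : realType) (T : Type) (A : set T) : Prop :=
  ~ (card_le (powset T A) [set: R]) /\
  (forall (U : Type) (B : set U),
      card_le B A -> ~ card_le A B -> card_le (powset U B) [set: R]).

From HB Require Import structures.
From mathcomp Require Import all_boot all_order all_algebra.
From mathcomp Require Import all_classical all_reals all_analysis.
From mathcomp Require Import wochoice ring lra.
Import Order.TTheory GRing.Theory Num.Theory.
Import numFieldNormedType.Exports.
Local Open Scope classical_set_scope.
Local Open Scope card_scope.
Local Open Scope ring_scope.

(* Well-order Lam so that every initial segment I(a) is smaller than Lam;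
   by minimality of lambda, 2^I(a) <= c. Subsets of Lam are then totally
   ordered lexicographically, and A <lex B is witnessed by the germ (a, s)
   of its first difference a, s = A /\ I(a): the set s \/ {a} is <=lex B but
   not <=lex A. Germs are coded injectively by points of R x R, so A gives a
   set C(A) of points, monotone in A and strictly increasing along <lex.
   The index sets of rational boxes avoiding a point form an independent
   family on nat, so the filters Phi(C) generated by the tails and the index
   sets of the points of C strictly increase with C. A filter Phi on nat
   gives the topology in which a Euclidean open U with 0 in U is open iff
   {n | z + 1/(n+2) in U} is in Phi for F-many z; small balls around the
   points z + 1/(n+2), n in M, show that M in Phi' \ Phi yields a set open
   for Phi' but not for Phi. *)

Lemma card_le_inj_on {T U} {A : set T} {B : set U} (u0 : U) : A #<= B ->
  exists f : T -> U, (forall x, A x -> B (f x)) /\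
    (forall x y, A x -> A y -> f x = f y -> x = y).
Proof.
move=> /card_leP[f].
exists (fun x => if pselect (A x) is left h then val (f (SigSub (mem_set h)))
                 else u0); split.
  by move=> x Ax; case: pselect => // h; exact: set_valP.
move=> x y Ax Ay; case: pselect => // hx; case: pselect => // hy.
move=> /val_inj /(@inj _ _ _ f) => /(_ (in_setT _) (in_setT _)) fxy.
by have := congr1 val fxy.
Qed.

Lemma inj_on_card_le {T U} {A : set T} {B : set U} (f : T -> U) :
  (forall x, A x -> B (f x)) ->
  (forall x y, A x -> A y -> f x = f y -> x = y) -> A #<= B.
Proof.
move=> fAB finj; have [g] : $|{injfun A >-> B}|.
  apply/injfunPex; exists f; first by move=> x /fAB.
  by move=> x y /set_mem Ax /set_mem Ay; exact: finj.
exact: inj_card_le.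
Qed.

Lemma not_powsetT_card_le {U} (u0 : U) : ~ (powset U setT #<= [set: U]).
Proof.
move=> /(card_le_inj_on u0) [f [_ finj]].
pose D := [set x | exists S, f S = x /\ ~ S x].
have [Dd|nDd] := pselect (D (f D)).
  case: (Dd) => S [fS nS]; apply: nS.
  by rewrite (finj S D (fun _ _ => I) (fun _ _ => I) fS).
by apply: (nDd); exists D.
Qed.

Lemma card_le_graph {T U} {A : set T} {B : set U} (M : set (T * U)) :
  (forall p, M p -> B p.2) ->
  (forall p q, M p -> M q -> p.1 = q.1 -> p.2 = q.2) ->
  (forall p q, M p -> M q -> p.2 = q.2 -> p.1 = q.1) ->
  (forall x, A x -> exists y, M (x, y)) -> A #<= B.
Proof.
move=> MB Mfun Minj Adom.
have [[a Aa]|nA] := pselect (A !=set0); last first.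
  suff -> : A = set0 by exact: card_ge0.
  by apply/seteqP; split => x // Ax; apply: nA; exists x.
have [u0 _] := Adom a Aa.
pose f x := if pselect (exists y, M (x, y)) is left h then projT1 (cid h) else u0.
have fM x : A x -> M (x, f x).
  move=> Ax; rewrite /f; case: pselect => [h|]; last by move/(_ (Adom x Ax)).
  by case: (cid h).
apply: (inj_on_card_le f); first by move=> x /fM /MB.
by move=> x y Ax Ay fxy; exact: (Minj _ _ (fM x Ax) (fM y Ay) fxy).
Qed.

(* Zorn's lemma applied to partial injections from A to B. *)
Lemma card_le_total {T U} (A : set T) (B : set U) : A #<= B \/ B #<= A.
Proof.
pose P := [set M : set (T * U) | [/\ (forall p, M p -> A p.1 /\ B p.2),
   (forall p q, M p -> M q -> p.1 = q.1 -> p.2 = q.2) &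
   (forall p q, M p -> M q -> p.2 = q.2 -> p.1 = q.1)]].
have [M [[MAB Mfun Minj] Mmax]] : exists M, P M /\ forall N, M `<` N -> ~ P N.
  apply: Zorn_bigcup => C CP Ctot; split.
  - by move=> p [X CX Xp]; case: (CP X CX) => + _ _; apply.
  - move=> p q [X CX Xp] [Y CY Yq].
    case: (Ctot X Y CX CY) => XY.
      by case: (CP Y CY) => _ + _; apply => //; exact: XY.
    by case: (CP X CX) => _ + _; apply => //; exact: XY.
  - move=> p q [X CX Xp] [Y CY Yq].
    case: (Ctot X Y CX CY) => XY.
      by case: (CP Y CY) => _ _; apply => //; exact: XY.
    by case: (CP X CX) => _ _; apply => //; exact: XY.
have [Adom|] := pselect (forall x, A x -> exists y, M (x, y)).
  by left; apply: (card_le_graph M) => // p /MAB[].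
move=> /existsNP[x0 /not_implyP[Ax0 nx0]].
have [Bdom|] := pselect (forall y, B y -> exists x, M (x, y)).
  right; apply: (card_le_graph [set p | M (p.2, p.1)]).
  - by move=> p /MAB[].
  - by move=> p q Mp Mq /= e; exact: (Minj _ _ Mp Mq).
  - by move=> p q Mp Mq /= e; exact: (Mfun _ _ Mp Mq).
  - by move=> y /Bdom[x Mxy]; exists x.
move=> /existsNP[y0 /not_implyP[By0 ny0]].
have MN : M `<` (M `|` [set (x0, y0)]).
  split; first by move=> p Mp; left.
  by move=> /(_ (x0, y0) (or_intror erefl)) Mxy; apply: nx0; exists y0.
case: (Mmax _ MN); split.
- by move=> p [/MAB //|->].
- move=> p q [Mp|->] [Mq|->] //=; first exact: Mfun.
  + by move=> e; exfalso; apply: nx0; exists p.2; rewrite -e; case: p Mp {e}.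
  + by move=> e; exfalso; apply: nx0; exists q.2; rewrite e; case: q Mq {e}.
- move=> p q [Mp|->] [Mq|->] //=; first exact: Minj.
  + by move=> e; exfalso; apply: ny0; exists p.1; rewrite -e; case: p Mp {e}.
  + by move=> e; exfalso; apply: ny0; exists q.1; rewrite e; case: q Mq {e}.
Qed.

Lemma is_lambda_card_le {R : realType} {T} {Lam : set T} :
  is_lambda R T Lam -> Lam #<= [set: R].
Proof.
move=> [_ lam_min]; have [//|nle] := pselect (Lam #<= [set: R]).
have [//|RLam] := card_le_total Lam [set: R].
by case: (not_powsetT_card_le (0 : R)); exact: lam_min RLam nle.
Qed.

Lemma is_lambda_neq0 {R : realType} {T} {Lam : set T} :
  is_lambda R T Lam -> Lam !=set0.
Proof.
move=> [lam_big _]; apply: contra_notP lam_big => nLam.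
have powset0 u : powset T Lam u -> u = set0.
  move=> /= uLam; apply/seteqP; split => x // /uLam Lx; apply: nLam; by exists x.
apply: (inj_on_card_le (fun _ => 0 : R)) => // s t ps pt _.
by rewrite (powset0 s ps) (powset0 t pt).
Qed.

Section WellOrders.
Variable T : Type.

Definition well_order_on (Lam : set T) (lt : T -> T -> Prop) :=
  [/\ (forall x y, Lam x -> Lam y -> [\/ lt x y, x = y | lt y x]),
      (forall x y, Lam x -> Lam y -> lt x y -> ~ lt y x),
      (forall x y z, Lam x -> Lam y -> Lam z -> lt x y -> lt y z -> lt x z) &
      (forall S, S `<=` Lam -> S !=set0 ->
         exists m, S m /\ forall y, S y -> ~ lt y m)].

Definition segment (Lam : set T) (lt : T -> T -> Prop) (a : T) :=
  [set b | Lam b /\ lt b a].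

Lemma exists_well_order : exists lt, well_order_on setT lt.
Proof.
have [R Rwo] := well_ordering_principle {classic T}.
have Rwc : wo_chain R predT by move=> A _; exact: Rwo.
have Ranti := wo_chain_antisymmetric Rwc.
have Rtot := wo_chainW Rwc.
have Rmin (S : set T) : S !=set0 -> exists z, S z /\ forall x, S x -> R z x.
  move=> [s Ss]; have [|z [[zS zlb] _]] := Rwo [pred x | `[< S x >]].
    by exists s; rewrite unfold_in /=; apply/asboolP.
  exists z; split; first by move: zS; rewrite unfold_in => /asboolP.
  by move=> x Sx; apply: zlb; rewrite unfold_in; apply/asboolP.
exists (fun x y => R x y /\ x <> y); split.
- move=> x y _ _; have [->|xy] := pselect (x = y); first by constructor 2.
  have /orP[Rxy|Ryx] := Rtot x y isT isT; first by constructor 1.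
  by constructor 3; split=> // yx; apply: xy.
- move=> x y _ _ [Rxy xy] [Ryx _]; apply: xy; apply: Ranti => //; exact/andP.
- move=> x y z _ _ _ [Rxy xy] [Ryz yz].
  have [m [Sm mlb]] := Rmin [set x; y; z] (ex_intro _ x (or_introl (or_introl erefl))).
  have Sx : [set x; y; z] x by left; left.
  have Sy : [set x; y; z] y by left; right.
  have Sz : [set x; y; z] z by right.
  case: Sm => [[]|] E; rewrite E in mlb.
  + split; first exact: mlb.
    by move=> xz; subst z; apply: xy; apply: Ranti => //; exact/andP.
  + by exfalso; apply: xy; apply: Ranti => //; rewrite Rxy mlb.
  + by exfalso; apply: yz; apply: Ranti => //; rewrite Ryz mlb.
- move=> S _ /Rmin[z [Sz zlb]]; exists z; split => // y Sy [Ryz yz].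
  by apply: yz; apply: Ranti => //; rewrite Ryz zlb.
Qed.

Lemma well_order_onS {A B : set T} {lt} :
  well_order_on A lt -> B `<=` A -> well_order_on B lt.
Proof.
move=> [tri asym trans wf] BA; split.
- by move=> x y /BA Ax /BA Ay; exact: tri.
- by move=> x y /BA Ax /BA Ay; exact: asym.
- by move=> x y z /BA Ax /BA Ay /BA Az; exact: trans.
- by move=> S SB; apply: wf; exact: subset_trans SB BA.
Qed.

(* Pull back a well-order of T along an injection of Lam onto the first
   initial segment that is as large as Lam. *)
Lemma exists_small_well_order (Lam : set T) : Lam !=set0 ->
  exists lt, well_order_on Lam lt /\
    forall a, Lam a -> ~ (Lam #<= segment Lam lt a).
Proof.
move=> [t0 Lt0]; have [lt0 wo0] := exists_well_order.
have [tri0 asym0 trans0 wf0] := wo0.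
pose Big := [set a | Lam a /\ Lam #<= segment Lam lt0 a].
have [[al [[Lal Bigal] almin]]|noBig] :=
  pselect (exists al, Big al /\ forall y, Big y -> ~ lt0 y al); last first.
  exists lt0; split; first exact: (well_order_onS wo0).
  move=> a La Ha; have [m [Bm mmin]] := wf0 Big (fun _ _ => I) (ex_intro _ a (conj La Ha)).
  by apply: noBig; exists m.
have [g [gI ginj]] := card_le_inj_on t0 Bigal.
exists (fun x y => lt0 (g x) (g y)); split.
- split.
  + move=> x y Lx Ly; case: (tri0 (g x) (g y) I I) => h.
    * by constructor 1.
    * by constructor 2; apply: ginj.
    * by constructor 3.
  + by move=> x y _ _; exact: asym0.
  + by move=> x y z _ _ _; exact: trans0.
  + move=> S SL [s Ss].
    have [_ [[m Sm <-] mmin]] :=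
      wf0 (g @` S) (fun _ _ => I) (ex_intro _ (g s) (imageP g Ss)).
    by exists m; split => // y Sy; apply: mmin; exact: imageP.
- move=> a La Hc; have [Lga ltga] := gI a La.
  apply: (almin (g a)) => //; split => //; apply: (card_le_trans Hc).
  apply: (inj_on_card_le g).
    by move=> b [Lb ltb]; split => //; case: (gI b Lb).
  by move=> x y [Lx _] [Ly _]; exact: ginj.
Qed.

End WellOrders.

Arguments well_order_on {T}.
Arguments segment {T}.
Arguments exists_small_well_order {T Lam}.

Section Lexicographic.
Variables (T : Type) (Lam : set T) (lt : T -> T -> Prop).
Hypothesis wo : well_order_on Lam lt.

Definition agree_below (A B : set T) a :=
  forall b, Lam b -> lt b a -> (A b <-> B b).
Definition lex_lt (A B : set T) :=
  exists a, [/\ Lam a, B a, ~ A a & agree_below A B a].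
Definition lex_eq (A B : set T) := forall b, Lam b -> (A b <-> B b).
Definition lex_le A B := lex_lt A B \/ lex_eq A B.

Lemma lex_first_difference {A B} : ~ lex_eq A B ->
  exists m, [/\ Lam m, ~ (A m <-> B m) & agree_below A B m].
Proof.
have [_ _ _ wf] := wo; move=> nAB.
have : [set b | Lam b /\ ~ (A b <-> B b)] !=set0.
  apply: contra_notP nAB => /forallNP nex b Lb.
  by have /not_andP[//|/contra_notP] := nex b; apply.
move=> /(wf _ (fun b (h : _ /\ _) => h.1)) [m [[Lm nm] mmin]].
exists m; split => // b Lb ltbm; have [//|nb] := pselect (A b <-> B b).
by case: (mmin b (conj Lb nb) ltbm).
Qed.

Lemma lex_le_total A B : lex_le A B \/ lex_le B A.
Proof.
have [e|ne] := pselect (lex_eq A B); first by left; right.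
have [m [Lm nm ag]] := lex_first_difference ne.
have [Am|nAm] := pselect (A m).
  have nBm : ~ B m by move=> Bm; apply: nm.
  by right; left; exists m; split => // b Lb lbm; apply: iff_sym; exact: ag.
have Bm : B m by apply: contra_notP nm => nBm; split.
by left; left; exists m.
Qed.

Lemma lex_lt_trans A B C : lex_lt A B -> lex_lt B C -> lex_lt A C.
Proof.
have [tri _ trans _] := wo.
move=> [a [La Ba nAa agAB]] [c [Lc Cc nBc agBC]].
case: (tri a c La Lc) => [ac|ac|ca].
- exists a; split => //; first exact/(agBC a La ac).
  move=> b Lb ba; apply: iff_trans (agAB b Lb ba) _.
  by apply: agBC => //; exact: (trans b a c).
- by subst c.
- exists c; split => //; first by move=> Ac; apply: nBc; apply/(agAB c Lc ca).
  move=> b Lb bc; apply: iff_trans (agBC b Lb bc).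
  by apply: agAB => //; exact: (trans b c a).
Qed.

Lemma lex_le_trans A B C : lex_le A B -> lex_le B C -> lex_le A C.
Proof.
move=> [AB|AB] [BC|BC].
- by left; exact: lex_lt_trans AB BC.
- left; case: AB => a [La Ba nAa agAB]; exists a; split => //; first exact/(BC a La).
  by move=> b Lb ba; apply: iff_trans (agAB b Lb ba) (BC b Lb).
- left; case: BC => a [La Ca nBa agBC]; exists a; split => //; first by move/(AB a La).
  by move=> b Lb ba; apply: iff_trans (AB b Lb) (agBC b Lb ba).
- by right => b Lb; apply: iff_trans (AB b Lb) (BC b Lb).
Qed.

Lemma lex_le_sub A B : (forall b, Lam b -> A b -> B b) -> lex_le A B.
Proof.
move=> sAB; have [e|ne] := pselect (lex_eq A B); first by right.
have [m [Lm nm ag]] := lex_first_difference ne.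
left; exists m; split => //.
- have [//|nBm] := pselect (B m); case: nm; split; first exact: sAB.
  by move=> /nBm.
- by move=> Am; apply: nm; split => // _; exact: sAB.
Qed.

Lemma lex_neq_lt A B : A `<=` Lam -> B `<=` Lam -> A <> B ->
  lex_lt A B \/ lex_lt B A.
Proof.
move=> ALam BLam AB; have lex_eqE C D : C `<=` Lam -> D `<=` Lam -> lex_eq C D -> C = D.
  move=> CLam DLam CD; apply/seteqP; split => x.
  - by move=> Cx; apply/(CD x (CLam x Cx)).
  - by move=> Dx; apply/(CD x (DLam x Dx)).
case: (lex_le_total A B) => -[lt_AB|eq_AB]; [by left|by case: AB; exact: lex_eqE|by right|].
by case: AB; apply: lex_eqE => // b Lb; apply: iff_sym; exact: eq_AB.
Qed.

Lemma lex_lt_germ A B a : Lam a -> B a -> ~ A a -> agree_below A B a ->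
  lex_le ((A `&` segment Lam lt a) `|` [set a]) B /\
  ~ lex_le ((A `&` segment Lam lt a) `|` [set a]) A.
Proof.
have [tri _ _ _] := wo; move=> La Ba nAa ag; split.
  apply: lex_le_sub => b Lb [[Ab [_ ba]]|->] //.
  exact/(ag b Lb ba).
move=> [[c [Lc Ac ntc agc]]|e].
  case: (tri c a Lc La) => [ca|ca|ac].
  - by apply: ntc; left.
  - by subst c.
  - by apply: nAa; apply/(agc a La ac); right.
by apply: nAa; apply/(e a La); right.
Qed.

End Lexicographic.

Arguments lex_lt {T}.
Arguments lex_le {T}.
Arguments lex_le_total {T Lam lt}.
Arguments lex_le_trans {T Lam lt} wo {A B C}.
Arguments lex_neq_lt {T Lam lt} wo {A B}.
Arguments lex_lt_germ {T Lam lt} wo {A B a}.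

Section IndependentFamily.
Variable R : realType.

Lemma rat_between (x y : R) : x < y -> exists q : rat, x < ratr q /\ ratr q < y.
Proof. by move=> /rat_in_itvoo[q]; rewrite in_itv /= => /andP[]; exists q. Qed.

Lemma rat_interval_avoid {a b : rat} {x y : R} :
  ratr a < x -> x < ratr b -> y <> x ->
  exists a' b' : rat, [/\ ratr a <= ratr a' :> R, ratr a' < x, x < ratr b',
     ratr b' <= ratr b :> R & ~ (ratr a' < y /\ y < ratr b')].
Proof.
move=> ax xb yx; have [ylx|xly] : y < x \/ x < y.
  by case: (ltgtP y x) => h; [left|right|case: yx].
- have [a' [a'_gt a'x]] := rat_between (Num.max (ratr a) y) x
    ltac:(by rewrite gt_max ax ylx).
  move: a'_gt; rewrite gt_max => /andP[aa' ya'].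
  exists a', b; split => //; first exact: ltW.
  by case=> a'y; move: ya'; rewrite ltNge (ltW a'y).
- have [b' [xb' b'_lt]] := rat_between x (Num.min (ratr b) y)
    ltac:(by rewrite lt_min xb xly).
  move: b'_lt; rewrite lt_min => /andP[b'b b'y].
  exists a, b'; split => //; first exact: ltW.
  by case=> _ yb'; move: b'y; rewrite ltNge (ltW yb').
Qed.

Definition in_box (q : (rat * rat) * (rat * rat)) (v : R * R) :=
  [/\ ratr q.1.1 < v.1, v.1 < ratr q.1.2, ratr q.2.1 < v.2 & v.2 < ratr q.2.2].

Lemma exists_box_avoiding (v : R * R) (ws : seq (R * R)) : v \notin ws ->
  exists q, in_box q v /\ forall w, w \in ws -> ~ in_box q w.
Proof.
elim: ws => [_|w ws IH].
  have [a [a1 a2]] := rat_between (v.1 - 1) v.1 ltac:(lra).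
  have [b [b1 b2]] := rat_between v.1 (v.1 + 1) ltac:(lra).
  have [c [c1 c2]] := rat_between (v.2 - 1) v.2 ltac:(lra).
  have [e [e1 e2]] := rat_between v.2 (v.2 + 1) ltac:(lra).
  by exists ((a, b), (c, e)); split.
rewrite in_cons negb_or => /andP[vw /IH[[[a b] [c e]] [[/= h1 h2 h3 h4] hws]]].
have [w1|w2] : w.1 <> v.1 \/ w.2 <> v.2.
  case: v w vw {IH hws h1 h2 h3 h4} => v1 v2 [w1 w2] /=.
  have [->|] := pselect (w1 = v1); last by left.
  by have [->|] := pselect (w2 = v2); [rewrite eqxx|right].
- have [a' [b' [s1 s2 s3 s4 s5]]] := rat_interval_avoid h1 h2 w1.
  exists ((a', b'), (c, e)); split; first by split.
  move=> u; rewrite in_cons => /orP[/eqP ->|uws] [/= u1 u2 u3 u4]; first exact: s5.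
  apply: (hws u uws); split => //=; first exact: le_lt_trans s1 u1.
  exact: lt_le_trans u2 s4.
- have [c' [e' [s1 s2 s3 s4 s5]]] := rat_interval_avoid h3 h4 w2.
  exists ((a, b), (c', e')); split; first by split.
  move=> u; rewrite in_cons => /orP[/eqP ->|uws] [/= u1 u2 u3 u4]; first exact: s5.
  apply: (hws u uws); split => //=; first exact: le_lt_trans s1 u3.
  exact: lt_le_trans u4 s4.
Qed.

(* n codes a pair (k, q); the dummy index k makes every box q occur for
   infinitely many n. *)
Definition box_avoid (v : R * R) : set nat := [set n |
  if unpickle n : option (nat * ((rat * rat) * (rat * rat))) is Some p
  then ~ in_box p.2 v else True].

Lemma box_avoid_independent {v : R * R} {ws : seq (R * R)} N : v \notin ws ->
  exists n, [/\ (N <= n)%N, forall w, w \in ws -> box_avoid w n & ~ box_avoid v n].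
Proof.
move=> /exists_box_avoiding[q [qv qws]].
have code_inj : injective (fun k : nat => pickle (k, q)).
  by move=> k1 k2 /(pcan_inj (@pickleK _)) [].
have [k kN] := injective_gtn code_inj N.
by exists (pickle (k, q)); rewrite /box_avoid /= pickleK; split => //; exact: ltnW.
Qed.

End IndependentFamily.

Section Ticks.
Variable R : realType.

Definition offset (n : nat) : R := (n.+2%:R)^-1.
Definition tick (z : int) (n : nat) : R := z%:~R + offset n.
Definition radius (m : nat) : R := (m.+2%:R * m.+3%:R)^-1.

Lemma offset_gt0 n : 0 < offset n.
Proof. by rewrite /offset invr_gt0 ltr0n. Qed.

Lemma offset_le n : 2 * offset n <= 1.
Proof. by rewrite /offset ler_pdivrMr ?ltr0n // mul1r (ler_nat R 2). Qed.

Lemma radius_gt0 m : 0 < radius m.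
Proof. by rewrite /radius invr_gt0 mulr_gt0 ?ltr0n. Qed.

Lemma radius_le m : 4 * radius m <= 1.
Proof.
have h2 : (2 : R) <= m.+2%:R by rewrite (ler_nat R 2).
have h3 : (2 : R) <= m.+3%:R by rewrite (ler_nat R 2).
by rewrite /radius ler_pdivrMr; nra.
Qed.

Lemma radius_le_offset_dist {n m} : n <> m -> radius m <= `|offset n - offset m|.
Proof.
move=> nm; rewrite /radius /offset.
set r := n.+2%:R : R; set s := m.+2%:R : R.
have -> : m.+3%:R = s + 1 by rewrite /s natr1.
have r2 : 2 <= r by rewrite /r (ler_nat R 2).
have s2 : 2 <= s by rewrite /s (ler_nat R 2).
have [lnm|lmn] : (n < m)%N \/ (m < n)%N by case: (ltngtP n m) => h; [left|right|].
- have rs : r + 1 <= s by rewrite /r /s natr1 ler_nat.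
  have -> : r^-1 - s^-1 = (s - r) / (r * s) by field; apply/andP; split; apply/eqP; lra.
  rewrite ger0_norm; last by apply: divr_ge0; [lra|nra].
  rewrite ler_pdivlMr; last nra.
  by rewrite mulrC ler_pdivrMr; nra.
- have rs : s + 1 <= r by rewrite /r /s natr1 ler_nat.
  have -> : r^-1 - s^-1 = - ((r - s) / (r * s)) by field; apply/andP; split; apply/eqP; lra.
  rewrite normrN ger0_norm; last by apply: divr_ge0; [lra|nra].
  rewrite ler_pdivlMr; last nra.
  by rewrite mulrC ler_pdivrMr; nra.
Qed.

Lemma in_ballE (x e t : R) : ball x e t = (`|x - t| < e).
Proof. by rewrite -ball_normE. Qed.

Lemma intr_norm_ge1 {z : int} : z <> 0 -> 1 <= (z%:~R : R) \/ (z%:~R : R) <= -1.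
Proof.
move=> z0; have := @norm_intr_ge1 _ (z%:~R : R) (intr_int _ _).
rewrite intr_eq0 => /(_ (introT negP (fun h => z0 (eqP h)))).
by rewrite ler_normr => /orP[h|h]; [left|right; lra].
Qed.

Lemma intr_dist_lt1 (z1 z2 : int) : `|z1%:~R - z2%:~R : R| < 1 -> z1 = z2.
Proof.
move=> h; have [//|/eqP/negbTE z12] := pselect (z1 = z2).
exfalso; have := @norm_intr_ge1 _ ((z1 - z2)%:~R : R) (intr_int _ _).
by rewrite intr_eq0 subr_eq0 intrB z12 => /(_ isT); lra.
Qed.

Lemma open_offset_tail {U : set R} {x : R} : open U -> U x ->
  exists N, forall n, (N <= n)%N -> U (x + offset n).
Proof.
move=> oU Ux; have [e /= e0 sub] := open_nbhs_nbhs (conj oU Ux).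
exists (Num.truncn (e^-1)) => n Nn; apply: sub => /=.
rewrite opprD addrA subrr add0r normrN ger0_norm; last exact: ltW (offset_gt0 n).
rewrite /offset -[e]invrK ltf_pV2 ?posrE ?invr_gt0 ?ltr0n //.
apply: (lt_le_trans (truncnS_gt _)); rewrite ler_nat ltnS; exact: leqW.
Qed.

End Ticks.

Section TopologyOfFilter.
Variables (R : realType) (F : set (set int)).
Hypothesis HF : free_ultrafilter F.

Let F_sup {A B} : F A -> A `<=` B -> F B.
Proof. by case: HF => _ h _ _ _; exact: h. Qed.

Let F_setI {A B} : F A -> F B -> F (A `&` B).
Proof. by case: HF => _ _ h _ _; exact: h. Qed.

Let F_setT : F setT.
Proof. by case: HF => -[]. Qed.

Lemma ultra_not_subsingleton {S : set int} :
  (forall z1 z2, S z1 -> S z2 -> z1 = z2) -> ~ F S.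
Proof.
have [[_ F0] _ _ _ Ffree] := HF; move=> S1 FS.
have [[z0 Sz0]|nS] := pselect (S !=set0).
  by apply: (Ffree z0); apply: (F_sup FS) => z Sz; exact: S1.
by apply: F0; apply: (F_sup FS) => z Sz; apply: nS; exists z.
Qed.

Lemma ultra_cosubsingleton (S : set int) :
  (forall z1 z2, ~ S z1 -> ~ S z2 -> z1 = z2) -> F S.
Proof.
have [_ _ _ Fult _] := HF; move=> S1.
by case: (Fult S) => // /ultra_not_subsingleton[] z1 z2; exact: S1.
Qed.

Definition tail_filter (Phi : set (set nat)) :=
  [/\ Phi setT, (forall A B, Phi A -> A `<=` B -> Phi B),
      (forall A B, Phi A -> Phi B -> Phi (A `&` B)) &
      (forall N, Phi [set n | (N <= n)%N])].

Definition hits (z : int) (U : set R) : set nat := [set n | U (tick R z n)].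

(* For Phi the filter of tails, this is tau[F]. *)
Definition tauN (Phi : set (set nat)) : set (set R) :=
  [set U | open U /\ (~ U 0 \/ F [set z : int | Phi (hits z U)])].

Lemma tauN_topology Phi : tail_filter Phi -> is_topology R (tauN Phi).
Proof.
case=> PhiT PhiS PhiI _; split; [|split].
- split; first exact: openT.
  by right; apply: (F_sup F_setT) => z _; apply: PhiS PhiT _ => n.
- move=> I U hU; split; first by apply: bigcup_open => i _; case: (hU i).
  have [[i _ Ui0]|n0] := pselect ((\bigcup_i U i) 0); last by left.
  right; case: (hU i) => _ [//|FU].
  by apply: (F_sup FU) => z /= h; apply: PhiS h _ => n Un; exists i.
- move=> U V [oU hU] [oV hV]; split; first exact: openI.
  have [[U0 V0]|n0] := pselect ((U `&` V) 0); last by left.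
  case: hU => [//|FU]; case: hV => [//|FV].
  right; apply: (F_sup (F_setI FU FV)) => z [/= h1 h2].
  by apply: PhiS (PhiI _ _ h1 h2) _ => n.
Qed.

Lemma tauF_sub_tauN Phi : tail_filter Phi -> tauF R F `<=` tauN Phi.
Proof.
case=> _ PhiS _ Phi_tail U [oU [n0|FU]]; split => //; first by left.
right; apply: (F_sup FU) => z /= Uz.
have [N hN] := open_offset_tail _ oU Uz.
by apply: PhiS (Phi_tail N) _ => n /hN.
Qed.

Lemma tauN_sub_eta Phi : tauN Phi `<=` eta_top R.
Proof. by move=> U []. Qed.

Lemma tauN_le Phi Phi' : Phi `<=` Phi' -> tauN Phi `<=` tauN Phi'.
Proof.
move=> PhiPhi' U [oU [h|h]]; split => //; [by left|right].
by apply: (F_sup h) => z /PhiPhi'.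
Qed.

Lemma tauN_Cset Phi : Cset R (tauN Phi) `<=` [set 0].
Proof.
move=> a Ca; have [//|a0] := pselect (a = 0); exfalso; apply: Ca.
apply/seteqP; split => N [U [hU Ua sub]].
  by exists U; split => //; case: hU.
exists (U `&` [set x | x != 0]); split => //.
- split; first by apply: openI => //; exact: open_neq.
  by left => -[_ /=]; rewrite eqxx.
- by split => //=; apply/eqP.
- by move=> t [/sub].
Qed.

Lemma tauF_sep0 {y : R} : y <> 0 -> exists U V,
  [/\ tauF R F U, tauF R F V, U 0, V y & U `&` V = set0].
Proof.
move=> y0; have ay : 0 < `|y| by rewrite normr_gt0; apply/eqP.
pose r := Num.min (`|y| / 2) (4^-1).
have r0 : 0 < r by rewrite lt_min; apply/andP; split; lra.
have r1 : r <= `|y| / 2 by rewrite ge_min lexx.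
have r2 : r <= 4^-1 by rewrite ge_min lexx orbT.
have cbE : closed_ball y r = [set t | `|y - t| <= r] by rewrite closed_ballE.
(* The complement of a small closed ball contains all but at most one integer. *)
exists (~` closed_ball y r), (ball y r); split.
- split; first by rewrite openC; exact: closed_ball_closed.
  right; apply: ultra_cosubsingleton => z1 z2.
  rewrite cbE /= => /negP/negPn h1 /negP/negPn h2; apply: intr_dist_lt1.
  have := ler_distD y (z1%:~R : R) z2%:~R; rewrite (distrC (z1%:~R : R) y); lra.
- by split; [exact: ball_open|left; rewrite in_ballE subr0; lra].
- by rewrite cbE /= subr0; lra.
- by rewrite in_ballE subrr normr0.
- by apply/seteqP; split => // t [/=]; rewrite cbE in_ballE /=; lra.
Qed.

Lemma tauF_sep (x y : R) : x <> 0 -> y <> 0 -> x <> y -> exists U V,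
  [/\ tauF R F U, tauF R F V, U x, V y & U `&` V = set0].
Proof.
move=> x0 y0 xy.
have ax : 0 < `|x| by rewrite normr_gt0; apply/eqP.
have ay : 0 < `|y| by rewrite normr_gt0; apply/eqP.
have axy : 0 < `|x - y| by rewrite normr_gt0 subr_eq0; apply/eqP.
pose r := Num.min (Num.min `|x| `|y|) `|x - y| / 2.
have r0 : 0 < r by rewrite divr_gt0 // !lt_min ax ay axy.
have r1 : 2 * r <= `|x| by rewrite /r mulrC divfK ?ge_min ?lexx //; lra.
have r2 : 2 * r <= `|y| by rewrite /r mulrC divfK ?ge_min ?lexx ?orbT //; lra.
have r3 : 2 * r <= `|x - y| by rewrite /r mulrC divfK ?ge_min ?lexx ?orbT //; lra.
exists (ball x r), (ball y r); split.
- by split; [exact: ball_open|left; rewrite in_ballE subr0; lra].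
- by split; [exact: ball_open|left; rewrite in_ballE subr0; lra].
- by rewrite in_ballE subrr normr0.
- by rewrite in_ballE subrr normr0.
- apply/seteqP; split => // t [/=]; rewrite !in_ballE => h1 h2.
  by have := ler_distD t x y; rewrite (distrC t y); lra.
Qed.

Lemma tauF_hausdorff : hausdorff_top R (tauF R F).
Proof.
move=> x y; have [->|x0] := pselect (x = 0) => xy.
  by apply: tauF_sep0 => y0; apply: xy; rewrite y0.
have [->|y0] := pselect (y = 0); last exact: tauF_sep.
have [U [V [hU hV U0 Vx UV]]] := tauF_sep0 x0.
by exists V, U; split => //; rewrite setIC.
Qed.

Lemma tauN_LL0 Phi : tail_filter Phi -> LL0 R (tauN Phi).
Proof.
move=> Phi_tail; split; last exact: tauN_Cset.
split; [exact: tauN_topology|move=> x y xy|exact: tauN_sub_eta].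
have [U [V [hU hV Ux Vy UV]]] := tauF_hausdorff x y xy.
by exists U, V; split => //; apply: tauF_sub_tauN.
Qed.

(* The radii keep each ball around tick z n away from 0, from the balls
   around ticks of other integers, and from all ticks of z except tick z n. *)
Definition Uticks (M : set nat) : set R := ball 0 2^-1 `|`
  \bigcup_(p in [set p : int * nat | M p.2]) ball (tick R p.1 p.2) (radius R p.2).

Lemma Uticks_open M : open (Uticks M).
Proof. by apply: openU; [exact: ball_open|apply: bigcup_open => p _; exact: ball_open]. Qed.

Lemma Uticks0 M : Uticks M 0.
Proof. by left; rewrite in_ballE subrr normr0. Qed.

Lemma hits_Uticks M (z : int) : z <> 0 -> hits z (Uticks M) = M.
Proof.
move=> z0; apply/seteqP; split => n /=; last first.
  move=> Mn; right; exists (z, n) => //=.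
  by rewrite in_ballE subrr normr0; exact: radius_gt0.
have ipn := offset_gt0 R n; have ipn2 := offset_le R n.
case.
  rewrite in_ballE /tick sub0r normrN ltr_norml => /andP[h1 h2].
  case: (intr_norm_ge1 R z0) => h; exfalso; move: h1 h2 h ipn ipn2.
    by generalize (offset R n) (z%:~R : R) => t w; lra.
  by generalize (offset R n) (z%:~R : R) => t w; lra.
move=> [[z' m] /= Mm]; rewrite in_ballE /tick => h.
have [zz|zz] := pselect (z' = z).
  subst z'; have [->//|nm] := pselect (n = m); exfalso.
  have := radius_le_offset_dist R nm; move: h.
  rewrite opprD addrACA subrr add0r distrC => h1 h2.
  by have := lt_le_trans h1 h2; rewrite ltxx.
have zz0 : z' - z <> 0 by move=> /eqP; rewrite subr_eq0 => /eqP.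
have ipm := offset_gt0 R m; have ipm2 := offset_le R m; have rm := radius_le R m.
move: h; rewrite ltr_norml => /andP[h1 h2]; exfalso.
case: (intr_norm_ge1 R zz0); rewrite intrB => h;
  move: h h1 h2 ipm ipm2 rm ipn ipn2;
  generalize (offset R n) (offset R m) (radius R m) (z%:~R : R) (z'%:~R : R);
  clear => a b c d e; lra.
Qed.

Lemma tauN_strict Phi Phi' M : Phi' M -> ~ Phi M ->
  tauN Phi' (Uticks M) /\ ~ tauN Phi (Uticks M).
Proof.
move=> Phi'M nPhiM; split.
  split; first exact: Uticks_open.
  right; apply: ultra_cosubsingleton => z1 z2 /= nh1 nh2.
  suff [-> ->] : z1 = 0 /\ z2 = 0 by [].
  by split; [apply: contra_notP nh1|apply: contra_notP nh2] => z0; rewrite hits_Uticks.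
move=> [_ [|FU]]; first by case; exact: Uticks0.
apply: (ultra_not_subsingleton _ FU) => z1 z2 /= h1 h2.
suff [-> ->] : z1 = 0 /\ z2 = 0 by [].
by split; apply: contra_notP nPhiM => z0; [move: h1|move: h2]; rewrite hits_Uticks.
Qed.

End TopologyOfFilter.

Arguments tauN {R}.
Arguments tauN_le {R F} HF {Phi Phi'}.
Arguments tauN_strict {R F} HF {Phi Phi' M}.
Arguments tauN_LL0 {R F} HF {Phi}.
Arguments tauF_sub_tauN {R F} HF {Phi}.

Section AvoidFilter.
Variable R : realType.

Definition avoid_filter (C : set (R * R)) : set (set nat) :=
  [set M | exists N (ws : seq (R * R)), (forall w, w \in ws -> C w) /\
     forall n, (N <= n)%N -> (forall w, w \in ws -> box_avoid R w n) -> M n].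

Lemma avoid_filter_tail C : tail_filter (avoid_filter C).
Proof.
split.
- by exists 0%N, [::].
- move=> A B [N [ws [wsC wsA]]] AB; exists N, ws; split => // n Nn hw.
  exact/AB/wsA.
- move=> A B [N1 [ws1 [ws1C ws1A]]] [N2 [ws2 [ws2C ws2B]]].
  exists (maxn N1 N2), (ws1 ++ ws2); split.
    by move=> w; rewrite mem_cat => /orP[/ws1C|/ws2C].
  move=> n; rewrite geq_max => /andP[n1 n2] hw; split.
    by apply: ws1A => // w ww; apply: hw; rewrite mem_cat ww.
  by apply: ws2B => // w ww; apply: hw; rewrite mem_cat ww orbT.
- by move=> N; exists N, [::].
Qed.

Lemma avoid_filter_le C C' : C `<=` C' -> avoid_filter C `<=` avoid_filter C'.
Proof. by move=> CC' M [N [ws [wsC wsM]]]; exists N, ws; split => // w /wsC /CC'. Qed.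

Lemma avoid_filter_strict C C' v : C' v -> ~ C v ->
  avoid_filter C' (box_avoid R v) /\ ~ avoid_filter C (box_avoid R v).
Proof.
move=> C'v nCv; split.
  exists 0%N, [:: v]; split; first by move=> w; rewrite inE => /eqP ->.
  by move=> n _; apply; rewrite inE.
move=> [N [ws [wsC wsv]]].
have vws : v \notin ws by apply/negP => /wsC.
have [n [Nn hw nv]] := box_avoid_independent R N vws.
exact/nv/wsv.
Qed.

End AvoidFilter.

Arguments avoid_filter {R}.
Arguments avoid_filter_tail {R}.
Arguments avoid_filter_le {R C C'}.
Arguments avoid_filter_strict {R C C' v}.

Section LexChain.
Variables (R : realType) (F : set (set int)).
Hypothesis HF : free_ultrafilter F.
Variables (T : Type) (Lam : set T) (lt : T -> T -> Prop).
Hypothesis wo : well_order_on Lam lt.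

Definition germ (d : T * set T) := Lam d.1 /\ d.2 `<=` segment Lam lt d.1.

Variable code : T * set T -> R * R.
Hypothesis code_inj : forall d d', germ d -> germ d' -> code d = code d' -> d = d'.

Definition germs_below (A : set T) :=
  [set d | germ d /\ lex_le Lam lt (d.2 `|` [set d.1]) A].

Definition tau_lex (A : set T) : set (set R) :=
  tauN F (avoid_filter (code @` germs_below A)).

Lemma tau_lex_le A B : lex_le Lam lt A B -> tau_lex A `<=` tau_lex B.
Proof.
move=> AB; apply: (tauN_le HF); apply: avoid_filter_le.
move=> _ [d [gd dA] <-]; exists d => //; split => //.
exact: (lex_le_trans wo dA AB).
Qed.

Lemma tau_lex_lt A B : lex_lt Lam lt A B -> tau_lex A <> tau_lex B.
Proof.
move=> [a [La Ba nAa ag]] AB.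
have [germB germA] := lex_lt_germ wo La Ba nAa ag.
set s := A `&` segment Lam lt a in germB germA.
have gs : germ (a, s) by split => // b [].
have nC : ~ (code @` germs_below A) (code (a, s)).
  by move=> [d [gd dA] /code_inj] => /(_ gd gs) ed; apply: germA; rewrite ed in dA.
have gB : germs_below B (a, s) by [].
have [C'v nCv] := avoid_filter_strict (imageP code gB) nC.
have [+ ntau] := tauN_strict (R := R) HF C'v nCv.
by rewrite -/(tau_lex B) -AB.
Qed.

Lemma lex_chain : exists K : set (set (set R)),
  [/\ is_chain R K, K `<=` LL0 R, card_eq K (powset T Lam) &
      forall tau, K tau -> tauF R F `<=` tau].
Proof.
exists (tau_lex @` powset T Lam); split.
- move=> _ _ [A _ <-] [B _ <-].
  by case: (lex_le_total wo A B) => AB; [left|right]; exact: tau_lex_le.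
- by move=> _ [A _ <-]; apply: (tauN_LL0 HF); exact: avoid_filter_tail.
- apply: inj_card_eq => A B /set_mem ALam /set_mem BLam tauAB.
  apply: contrapT => AB.
  by case: (lex_neq_lt wo ALam BLam AB) => /tau_lex_lt; apply; rewrite tauAB.
- by move=> _ [A _ <-]; exact: (tauF_sub_tauN HF (avoid_filter_tail _)).
Qed.

End LexChain.

Arguments germ {T}.
Arguments lex_chain {R F} HF {T Lam lt} wo {code}.

Lemma is_lambda_germ_code {R : realType} {T} {Lam : set T} : is_lambda R T Lam ->
  exists lt (code : T * set T -> R * R), well_order_on Lam lt /\
    forall d d', germ Lam lt d -> germ Lam lt d' -> code d = code d' -> d = d'.
Proof.
move=> lam; have [lt [wo small]] := exists_small_well_order (is_lambda_neq0 lam).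
have small_codes a : exists e : set T -> R, Lam a -> forall s t,
    s `<=` segment Lam lt a -> t `<=` segment Lam lt a -> e s = e t -> s = t.
  have [La|nLa] := pselect (Lam a); last by exists (fun _ => 0).
  have [_ lam_min] := lam.
  have := lam_min T _ (subset_card_le (fun b (h : segment Lam lt a b) => h.1)) (small a La).
  by move=> /(card_le_inj_on 0)[e [_ einj]]; exists e => _; exact: einj.
have [e he] := choice small_codes.
have [io [_ io_inj]] := card_le_inj_on 0 (is_lambda_card_le lam).
exists lt, (fun d => (io d.1, e d.1 d.2)); split => // -[a s] [a' s'] [/= La sa] [/= La' sa'].
by move=> [/io_inj-/(_ La La') aa']; subst a' => /(he a La s s' sa sa') ->.
Qed.

Theorem theorem9 (R : realType) (T : Type) (Lam : set T) (F : set (set int)) :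
  is_lambda R T Lam -> free_ultrafilter F ->
  exists K : set (set (set R)),
    [/\ is_chain R K, K `<=` LL0 R, card_eq K (powset T Lam) &
        forall tau, K tau -> tauF R F `<=` tau].
Proof.
move=> lam HF; have [lt [code [wo code_inj]]] := is_lambda_germ_code lam.
exact: (lex_chain HF wo code_inj).
Qed.
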